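(* Let $P$ be a Coxeter polytope with facet set $S$ and let $T_1,T_2\subset S$ be disjoint. If $T_1\cup T_2$ defines a face of $P$ and $T_1\subset T_2^\perp$, then each of $T_1\cup T_2^0$, $T_1\cup T_2^0\cup T_2^+$ and $T_1\cup T_2^0\cup T_2^-$ also defines a face of $P$.
   Context: A Cartan matrix on a finite set $S$: $A_{ss}=2$, $A_{st}\le0$ ($s\neq t$), $A_{st}=0\iff A_{ts}=0$, and $A_{st}A_{ts}\ge4$ or $=4\cos^2(\pi/k)$ for an integer $k\ge2$. A Coxeter polytope is a projective polytope $P\subset\mathbb{P}(V)$ with facet set $S$ and pairs $(\alpha_s,v_s)\in V^*\times V$ such that $A=A_P=(\alpha_s(v_t))_{s,t\in S}$ is a Cartan matrix and $\bigcap_s\{\alpha_s\le0\}$ is a cone lifting $P$. For $T\subset S$, $A_T=(A_{st})_{s,t\in T}$; the irreducible components of $T$ are the connected components of the graph on $T$ with edges $\{s,t\}$ where $A_{st}\neq0$. An irreducible Cartan matrix is of positive/zero/negative type according to the sign of its Perron–Frobenius eigenvalue (the simple real eigenvalue maximizing $|2-\mu|$ over eigenvalues $\mu$). $T^+$, $T^0$, $T^-$ denote the unions of the irreducible components of $T$ whose Cartan submatrices are of positive, zero, negative type respectively. $T^\perp=\{s\in S: A_{st}=0\ \text{for all } t\in T\}$. A subset $S'\subset S$ defines a face of $P$ if there exists $x\in V$ with $\alpha_s(x)=0$ for $s\in S'$ and $\alpha_s(x)<0$ for $s\notin S'$ (equivalently, $S'=S_f=\{s:f\subset\mathbb{P}(\ker\alpha_s)\}$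 for some face $f$, possibly empty or $\mathrm{Int}P$). *)

From HB Require Import structures.
From mathcomp Require Import all_boot all_order all_algebra.
From mathcomp Require Import boolp reals trigo.
From mathcomp.real_closed Require Import complex.
Set Implicit Arguments. Unset Strict Implicit. Unset Printing Implicit Defensive.
Import Order.TTheory GRing.Theory Num.Theory.
Local Open Scope ring_scope.

Section CoxeterDefs.
Variable R : realType.

(* V = R^n realized as row vectors 'rV[R]_n; V^* realized as row vectors too,
   with the duality pairing alpha(x) = \sum_i alpha_i x_i. *)
Definition pairing (n : nat) (a x : 'rV[R]_n) : R := \sum_(i < n) a 0 i * x 0 i.

Variable S : finType.

Definition is_cartan (A : S -> S -> R) : Prop :=
  (forall s, A s s = 2) /\
  (forall s t, s != t -> A s t <= 0) /\
  (forall s t, A s t = 0 <-> A t s = 0) /\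
  (forall s t, 4 <= A s t * A t s \/
     exists k : nat, (2 <= k)%N /\ A s t * A t s = 4 * (cos (pi / k%:R)) ^+ 2).

Variable n : nat.

Definition defines_face (alpha : S -> 'rV[R]_n) (T : {set S}) : Prop :=
  exists x : 'rV[R]_n, forall s,
    (s \in T -> pairing (alpha s) x = 0) /\ (s \notin T -> pairing (alpha s) x < 0).

Definition cartan_of (alpha v : S -> 'rV[R]_n) : S -> S -> R :=
  fun s t => pairing (alpha s) (v t).

(* (alpha_s, v_s)_{s in S} define a Coxeter polytope P in P(V) with facet set S:
   - A_P = (alpha_s(v_t)) is a Cartan matrix;
   - the cone {alpha_s <= 0 for all s} has nonempty interior;
   - it is sharp (contains no line), so that it lifts a properly convex polytope;
   - each alpha_s cuts out a facet (codimension-one face), so the facets are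
     exactly indexed by S. *)
Definition is_coxeter_polytope (alpha v : S -> 'rV[R]_n) : Prop :=
  [/\ is_cartan (cartan_of alpha v),
      defines_face alpha set0,
      (forall x : 'rV[R]_n, (forall s, pairing (alpha s) x = 0) -> x = 0)
    & forall s, defines_face alpha [set s]].

(* irreducible components of T: connected components of the graph on T with
   edges {s,t} such that A_st <> 0 *)
Definition cartan_rel (A : S -> S -> R) (T : {set S}) : rel S :=
  fun s t => [&& s \in T, t \in T & A s t != 0].

Definition component (A : S -> S -> R) (T : {set S}) (s : S) : {set S} :=
  [set t in T | connect (cartan_rel A T) s t].

Definition subA (A : S -> S -> R) (C : {set S}) : 'M[R]_#|C| :=
  \matrix_(i, j) A (enum_val i) (enum_val j).

End CoxeterDefs.

Section Spectral.
Variable R : realType.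

Definition eigenC (m : nat) (M : 'M[R]_m) (l : R[i]) : bool :=
  root (map_poly (fun x : R => Complex x 0) (char_poly M)) l.

Definition spectral_radius_is (m : nat) (M : 'M[R]_m) (r : R) : Prop :=
  (exists l, eigenC M l /\ `|l| = Complex r 0) /\
  (forall l, eigenC M l -> `|l| <= Complex r 0).

(* Perron-Frobenius eigenvalue mu of an irreducible Cartan matrix M: writing
   M = 2I - B with B >= 0 irreducible, mu = 2 - rho(B), the (simple, real)
   eigenvalue of M with maximal |2 - mu| corresponding to the Perron root of B. *)
Definition pf_eigenvalue_is (m : nat) (M : 'M[R]_m) (mu : R) : Prop :=
  spectral_radius_is (2%:M - M) (2 - mu).

Definition positive_type (m : nat) (M : 'M[R]_m) : Prop :=
  exists mu, pf_eigenvalue_is M mu /\ 0 < mu.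
Definition zero_type (m : nat) (M : 'M[R]_m) : Prop :=
  exists mu, pf_eigenvalue_is M mu /\ mu = 0.
Definition negative_type (m : nat) (M : 'M[R]_m) : Prop :=
  exists mu, pf_eigenvalue_is M mu /\ mu < 0.

Variable S : finType.

Definition pos_part (A : S -> S -> R) (T : {set S}) : {set S} :=
  [set s in T | `[< positive_type (subA A (component A T s)) >] ].
Definition zero_part (A : S -> S -> R) (T : {set S}) : {set S} :=
  [set s in T | `[< zero_type (subA A (component A T s)) >] ].
Definition neg_part (A : S -> S -> R) (T : {set S}) : {set S} :=
  [set s in T | `[< negative_type (subA A (component A T s)) >] ].

Definition perp (A : S -> S -> R) (T : {set S}) : {set S} :=
  [set s | [forall t in T, A s t == 0]].

End Spectral.

From HB Require Import structures.
From mathcomp Require Import all_boot all_order all_algebra.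
From mathcomp Require Import boolp reals trigo.
From mathcomp.real_closed Require Import complex.
From mathcomp Require Import lra.
Set Implicit Arguments. Unset Strict Implicit. Unset Printing Implicit Defensive.
Import Order.TTheory GRing.Theory Num.Theory.
Local Open Scope ring_scope.

(* Let N be the union of the irreducible components of T2 that are dropped;
   none of them is of zero type, and N is orthogonal to the rest of
   T := T1 :|: T2 (to T1 by hypothesis, to the rest of T2 because N is a union
   of components).  By Gordan's alternative, either A_N c < 0 for some c, or
   y A_N = 0 for some nonzero y >= 0.  In the second case y is positive on a
   whole irreducible component C of N with y A_C = 0, so y is a positive left
   eigenvector of 2 - A_C for the eigenvalue 2, which is therefore its Perron
   root: C is of zero type, which is excluded.  In the first case
   z := \sum_(t in N) c t *: v t vanishes on T :\: N and is negative on N, so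
   K x + z, with x in the relative interior of the face of T and K large,
   cuts out T :\: N. *)

Section Gordan.
Variable R : realFieldType.

Lemma sumr_delta (I : finType) (x : I) (F : I -> R) :
  \sum_i (x == i)%:R * F i = F x.
Proof.
rewrite (bigD1 x) //= eqxx mul1r big1 ?addr0 // => i /negbTE.
by rewrite eq_sym => ->; rewrite mul0r.
Qed.

Lemma exists_separator (I : finType) (Pl Pu : pred I) (L U : I -> R) :
  (forall q p, Pl q -> Pu p -> L q < U p) ->
  exists t, (forall q, Pl q -> L q < t) /\ (forall p, Pu p -> t < U p).
Proof.
move=> LU.
pose top := \big[Num.max/0]_(q | Pl q) L q + 1.
pose up := \big[Num.min/top]_(p | Pu p) U p.
have L_up q : Pl q -> L q < up.
  move=> Pq; apply: lt_bigmin => [|p /(LU q p Pq)//].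
  by apply: le_lt_trans (le_bigmax_cond 0 L Pq) _; rewrite ltrDl ltr01.
pose lo := \big[Num.max/(up - 1)]_(q | Pl q) L q.
have lo_up : lo < up by apply: bigmax_lt => //; rewrite gtrDl ltrN10.
exists ((lo + up) / 2); split.
- move=> q Pq; apply: le_lt_trans (le_bigmax_cond (up - 1) L Pq) _.
  by rewrite -/lo ltr_pdivlMr //; lra.
- move=> p Pp; apply: lt_le_trans (bigmin_le_cond top U Pp).
  by rewrite -/up ltr_pdivrMr //; lra.
Qed.

Lemma fourier_motzkin_step (I : finType) (b d : I -> R) :
  (forall i, b i = 0 -> d i < 0) ->
  (forall p q, 0 < b p -> b q < 0 -> b p * d q - b q * d p < 0) ->
  exists t, forall i, d i + b i * t < 0.
Proof.
move=> d_lt0 bd_lt0.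
have [t [lt_t gt_t]] : exists t, (forall q, b q < 0 -> - d q / b q < t) /\
    (forall p, 0 < b p -> t < - d p / b p).
  apply: exists_separator => q p bq bp.
  rewrite ltr_ndivrMr // mulrAC ltr_pdivrMr //.
  by have := bd_lt0 p q bp bq; lra.
exists t => i; case: (ltgtP (b i) 0) => [bi|bi|/[dup] bi /d_lt0].
- by have := lt_t i bi; rewrite ltr_ndivrMr //; lra.
- by have := gt_t i bi; rewrite ltr_pdivlMr //; lra.
- by rewrite bi mul0r addr0.
Qed.

Definition semipositive_null (K : eqType) (I : finType) (ks : seq K)
    (a : I -> K -> R) (y : I -> R) : Prop :=
  [/\ forall i, 0 <= y i, exists i, 0 < y i
    & forall k, k \in ks -> \sum_i y i * a i k = 0].

Section FourierMotzkinElimination.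
Variables (K : eqType) (I : finType) (a : I -> K -> R) (k0 : K).

(* The rows of the eliminated system: the rows i with a i k0 = 0, and, for
   a p k0 > 0 > a q k0, the row a p k0 * a q - a q k0 * a p. *)
Definition fm_index := ({i : I | a i k0 == 0} +
  {pq : I * I | (0 < a pq.1 k0) && (a pq.2 k0 < 0)})%type.

Definition fm_coef (j : fm_index) (i : I) : R :=
  match j with
  | inl i0 => (val i0 == i)%:R
  | inr pq => ((val pq).2 == i)%:R * a (val pq).1 k0
              - ((val pq).1 == i)%:R * a (val pq).2 k0
  end.

Definition fm_row (j : fm_index) (k : K) : R := \sum_i fm_coef j i * a i k.

Lemma fm_coef_sum (j : fm_index) (d : I -> R) :
  \sum_i fm_coef j i * d i =
  match j with
  | inl i0 => d (val i0)
  | inr pq => a (val pq).1 k0 * d (val pq).2 - a (val pq).2 k0 * d (val pq).1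
  end.
Proof.
case: j => [i0|pq] /=; first exact: sumr_delta.
under eq_bigr do rewrite mulrBl -!mulrA.
by rewrite sumrB !sumr_delta.
Qed.

Lemma fm_row_k0 (j : fm_index) : fm_row j k0 = 0.
Proof.
rewrite /fm_row fm_coef_sum; case: j => [[i /eqP //]|[[p q] _]] /=.
by rewrite mulrC subrr.
Qed.

Lemma fm_coef_ge0 (j : fm_index) (i : I) : 0 <= fm_coef j i.
Proof.
case: j => [i0|[[p q] /andP [/= ap aq]]] /=; first exact: ler0n.
rewrite subr_ge0 (@le_trans _ _ 0) //.
- by rewrite mulr_ge0_le0 ?ler0n ?ltW.
- by rewrite mulr_ge0 ?ler0n ?ltW.
Qed.

Lemma fm_coef_exists_gt0 (j : fm_index) : exists i, 0 < fm_coef j i.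
Proof.
case: j => [[i0 _]|[[p q] /andP [/= ap aq]]] /=.
  by exists i0; rewrite eqxx ltr01.
exists q; have /negbTE -> : p != q.
  by apply: contraTneq ap => ->; rewrite -leNgt ltW.
by rewrite eqxx mul1r mul0r subr0.
Qed.

Lemma fm_lift_solution (ks : seq K) : k0 \notin ks ->
  (exists c, forall j, \sum_(k <- ks) fm_row j k * c k < 0) ->
  exists c, forall i, \sum_(k <- k0 :: ks) a i k * c k < 0.
Proof.
move=> k0_ks [c row_lt0].
pose d i := \sum_(k <- ks) a i k * c k.
have row_d j : \sum_(k <- ks) fm_row j k * c k = \sum_i fm_coef j i * d i.
  under eq_bigr do rewrite /fm_row mulr_suml.
  rewrite exchange_big /=; apply: eq_bigr => i _.
  by rewrite /d mulr_sumr; apply: eq_bigr => k _; rewrite mulrA.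
have [|p q ap aq|t dt] := @fourier_motzkin_step I (a^~ k0) d.
- move=> i /eqP ai; have := row_lt0 (inl (exist _ i ai)).
  by rewrite row_d fm_coef_sum.
- have := row_lt0 (inr (exist _ (p, q) (introT andP (conj ap aq)))).
  by rewrite row_d fm_coef_sum.
exists (fun k => if k == k0 then t else c k) => i.
rewrite big_cons eqxx addrC.
rewrite (eq_big_seq (fun k => a i k * c k)) ?dt // => k k_ks.
by rewrite ifN //; apply: contraNneq k0_ks => <-.
Qed.

Lemma fm_lift_certificate (ks : seq K) :
  (exists y, semipositive_null ks fm_row y) ->
  exists y, semipositive_null (k0 :: ks) a y.
Proof.
case=> y [y_ge0 [j0 yj0] y_null].
exists (fun i => \sum_j y j * fm_coef j i); split.
- by move=> i; apply: sumr_ge0 => j _; rewrite mulr_ge0 ?fm_coef_ge0.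
- have [i0 ci0] := fm_coef_exists_gt0 j0; exists i0.
  rewrite (bigD1 j0) //= ltr_wpDr ?mulr_gt0 //.
  by apply: sumr_ge0 => j _; rewrite mulr_ge0 ?fm_coef_ge0.
move=> k k_ks; have -> : \sum_i (\sum_j y j * fm_coef j i) * a i k =
    \sum_j y j * fm_row j k.
  under eq_bigr do rewrite mulr_suml.
  rewrite exchange_big /=; apply: eq_bigr => j _.
  by rewrite /fm_row mulr_sumr; apply: eq_bigr => i _; rewrite mulrA.
move: k_ks; rewrite inE => /predU1P [->|/y_null //].
by apply: big1 => j _; rewrite fm_row_k0 mulr0.
Qed.

End FourierMotzkinElimination.

Lemma gordan (K : eqType) (ks : seq K) (I : finType) (a : I -> K -> R) :
  uniq ks ->
  (exists c, forall i, \sum_(k <- ks) a i k * c k < 0) \/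
  (exists y, semipositive_null ks a y).
Proof.
elim: ks I a => [|k0 ks IH] I a /=.
  case: (pickP (@predT I)) => [i0 _ _|I0 _]; [right|left].
  - by exists (fun=> 1); split=> [_||]; [exact: ler01|exists i0; exact: ltr01|].
  - by exists (fun=> 0) => i; have := I0 i.
case/andP => k0_ks /(IH _ (@fm_row K I a k0)) [sol|cert].
- by left; exact: fm_lift_solution sol.
- by right; exact: fm_lift_certificate cert.
Qed.

End Gordan.

Lemma char_poly_tr (R : comNzRingType) (m : nat) (B : 'M[R]_m) :
  char_poly B^T = char_poly B.
Proof.
rewrite /char_poly -det_tr; congr (\det _); apply/matrixP => i j.
by rewrite !mxE; case: eqP => [->|]; rewrite ?eqxx // => /nesym/eqP/negbTE ->.
Qed.

Section PerronBound.
Variable R : realType.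
Local Open Scope complex_scope.

Lemma eigenC_real (m : nat) (B : 'M[R]_m) (r : R) :
  eigenC B r%:C = eigenvalue B r.
Proof.
(* [eigenC] maps by a lambda; expose it as the ring morphism [real_complex R]. *)
rewrite /eigenC -[map_poly _ _]/(map_poly (real_complex R) (char_poly B)).
by rewrite fmorph_root eigenvalue_root_char.
Qed.

Lemma eigenC_eigenvalue_tr (m : nat) (B : 'M[R]_m) (l : R[i]) :
  eigenC B l = eigenvalue (map_mx (real_complex R) B^T) l.
Proof.
rewrite /eigenC -char_poly_tr.
rewrite -[map_poly _ _]/(map_poly (real_complex R) (char_poly B^T)).
by rewrite map_char_poly eigenvalue_root_char.
Qed.

Lemma eigenC_norm_le (m : nat) (B : 'M[R]_m) (u : 'rV[R]_m) (r : R) :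
  (forall i j, 0 <= B i j) -> (forall i, 0 < u 0 i) -> u *m B = r *: u ->
  forall l, eigenC B l -> `|l| <= r%:C.
Proof.
move=> B_ge0 u_gt0 uB l; rewrite eigenC_eigenvalue_tr.
case/eigenvalueP => w wB w_neq0.
have Bw i : \sum_j (B i j)%:C * w 0 j = l * w 0 i.
  move/rowP: wB => /(_ i); rewrite !mxE => <-.
  by apply: eq_bigr => j _; rewrite !mxE mulrC.
have uBj j : \sum_i u 0 i * B i j = r * u 0 j.
  by move/rowP: uB => /(_ j); rewrite !mxE.
have uC_gt0 i : 0 < (u 0 i)%:C by rewrite ltcE /= eqxx u_gt0.
have u_ge0 i : 0 <= (u 0 i)%:C := ltW (uC_gt0 i).
pose P := \sum_i (u 0 i)%:C * `|w 0 i|.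
have P_gt0 : 0 < P.
  have [j wj] : exists j, w 0 j != 0.
    apply/existsP; apply: contraNT w_neq0 => /existsPn w0.
    by apply/eqP/rowP => j; rewrite mxE; apply/eqP; rewrite -[_ == _]negbK w0.
  rewrite /P (bigD1 j) //=; apply: ltr_wpDr.
    by apply: sumr_ge0 => i _; rewrite mulr_ge0.
  by rewrite mulr_gt0 ?normr_gt0.
have uBw : \sum_i (u 0 i)%:C * \sum_j (B i j)%:C * `|w 0 j| = r%:C * P.
  under eq_bigr do rewrite mulr_sumr.
  rewrite exchange_big /= /P mulr_sumr; apply: eq_bigr => j _.
  under eq_bigr do rewrite mulrA -rmorphM.
  by rewrite -mulr_suml -rmorph_sum uBj rmorphM mulrA.
rewrite -(ler_pM2r P_gt0) -uBw mulr_sumr; apply: ler_sum => i _.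
rewrite mulrCA ler_wpM2l // -normrM -Bw (le_trans (ler_norm_sum _ _ _)) //.
by apply: ler_sum => j _; rewrite normrM ger0_norm ?ler0c.
Qed.

Lemma spectral_radius_is_left_perron (m : nat) (B : 'M[R]_m) (u : 'rV[R]_m)
    (r : R) :
  (0 < m)%N -> (forall i j, 0 <= B i j) -> (forall i, 0 < u 0 i) ->
  u *m B = r *: u -> 0 <= r -> spectral_radius_is B r.
Proof.
move=> m_gt0 B_ge0 u_gt0 uB r_ge0; split; last exact: eigenC_norm_le uB.
exists r%:C; split; last by rewrite ger0_norm ?ler0c.
rewrite eigenC_real; apply/eigenvalueP; exists u => //.
apply/eqP => /rowP /(_ (Ordinal m_gt0)); rewrite mxE => u0.
by have := u_gt0 (Ordinal m_gt0); rewrite u0 ltxx.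
Qed.

End PerronBound.

Section CartanComponents.
Variables (R : realType) (S : finType) (A : S -> S -> R).
Hypothesis A_diag : forall s, A s s = 2.
Hypothesis A_offdiag : forall s t, s != t -> A s t <= 0.
Hypothesis A_zero_sym : forall s t, A s t = 0 <-> A t s = 0.

Lemma zero_type_of_null_vector (C : {set S}) (u : S -> R) (s0 : S) :
  s0 \in C -> (forall s, s \in C -> 0 < u s) ->
  (forall t, t \in C -> \sum_(s in C) u s * A s t = 0) ->
  zero_type (subA A C).
Proof.
move=> s0C u_gt0 u_null; exists 0; split=> //; rewrite /pf_eigenvalue_is subr0.
apply: (spectral_radius_is_left_perron (u := \row_i u (enum_val i))) => //.
- by rewrite card_gt0; apply/set0Pn; exists s0.
- move=> i j; rewrite !mxE; have [<-|ij] := eqVneq i j.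
    by rewrite A_diag mulr1n subrr.
  rewrite mulr0n sub0r oppr_ge0 A_offdiag //.
  by rewrite (inj_eq enum_val_inj).
- by move=> i; rewrite mxE u_gt0 ?enum_valP.
apply/rowP => j; rewrite !mxE.
under eq_bigr do rewrite !mxE mulrBr.
have := u_null _ (enum_valP j); rewrite big_enum_val => null_j.
rewrite sumrB null_j subr0 (bigD1 j) //= eqxx mulr1n big1 ?addr0 1?mulrC //.
by move=> i /negbTE ->; rewrite mulr0n mulr0.
Qed.

Lemma cartan_rel_sym (T : {set S}) : symmetric (cartan_rel A T).
Proof.
move=> s t; have e : (A s t == 0) = (A t s == 0).
  by apply/idP/idP => /eqP /A_zero_sym /eqP.
by rewrite /cartan_rel e andbCA.
Qed.

Lemma component_eq (T : {set S}) (s t : S) :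
  connect (cartan_rel A T) s t -> component A T s = component A T t.
Proof.
move=> st; apply/setP => u; rewrite !inE.
by rewrite (same_connect (sym_connect_sym (@cartan_rel_sym T)) st).
Qed.

Lemma component_adj (N : {set S}) (s0 s t : S) :
  s \in N -> t \in component A N s0 -> A s t != 0 -> s \in component A N s0.
Proof.
move=> sN; rewrite !inE sN => /andP [tN s0t] st /=.
by apply: connect_trans s0t (connect1 _); rewrite cartan_rel_sym /cartan_rel sN tN.
Qed.

Lemma component_restrict (T N : {set S}) (s : S) :
  N \subset T -> closed (cartan_rel A T) N -> s \in N ->
  component A N s = component A T s.
Proof.
move=> NT N_closed sN.
have restrict_path p x :
    x \in N -> path (cartan_rel A T) x p -> path (cartan_rel A N) x p.
  elim: p x => [//|y p IH] x xN /= /andP [xy py].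
  have yN : y \in N by rewrite -(N_closed _ _ xy).
  by rewrite IH // andbT /cartan_rel xN yN; case/and3P: xy.
apply/setP => t; rewrite !inE; apply/andP/andP => [[tN Nst]|[_ Tst]].
  split; first exact: subsetP tN.
  apply: connect_sub Nst => x y /and3P [xN yN xy]; apply: connect1.
  by rewrite /cartan_rel (subsetP NT _ xN) (subsetP NT _ yN).
rewrite -(closed_connect N_closed Tst); split=> //.
by case/connectP: Tst => p /(restrict_path _ _ sN) Np ->; apply/connectP; exists p.
Qed.

Section NullVector.
Variables (N : {set S}) (y : S -> R).
Hypothesis y_ge0 : forall s, s \in N -> 0 <= y s.
Hypothesis y_null : forall t, t \in N -> \sum_(s in N) y s * A s t = 0.

Lemma null_vector_pos_adj (s t : S) :
  s \in N -> t \in N -> A s t != 0 -> 0 < y s -> 0 < y t.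
Proof.
move=> sN tN st ys; have [<- //|s_t] := eqVneq s t.
have := y_null tN; rewrite (bigD1 t) //= A_diag (bigD1 s) /=; last by rewrite sN.
have : y s * A s t < 0 by rewrite pmulr_rlt0 // lt_neqAle st A_offdiag.
have : \sum_(i | (i \in N) && (i != t) && (i != s)) y i * A i t <= 0.
  apply: sumr_le0 => i /andP [/andP [iN it] _].
  by rewrite mulr_ge0_le0 ?y_ge0 ?A_offdiag.
move=> *; lra.
Qed.

Lemma null_vector_pos_component (s0 : S) :
  s0 \in N -> 0 < y s0 -> forall t, t \in component A N s0 -> 0 < y t.
Proof.
move=> s0N ys0 t; rewrite inE => /andP [_ /connectP [p]].
elim: p s0 s0N ys0 => [|x p IH] s sN ys /=; first by move=> _ ->.
case/andP => /and3P [_ xN sx] px tl.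
exact: IH xN (null_vector_pos_adj sN xN sx ys) px tl.
Qed.

Lemma zero_type_component_of_null_vector (s0 : S) :
  s0 \in N -> 0 < y s0 -> zero_type (subA A (component A N s0)).
Proof.
move=> s0N ys0; set C := component A N s0.
have CN : C \subset N by apply/subsetP => t; rewrite inE => /andP [].
apply: (zero_type_of_null_vector (s0 := s0)).
- by rewrite inE s0N connect0.
- exact: null_vector_pos_component.
move=> t tC; rewrite -[RHS](y_null (subsetP CN t tC)).
rewrite [RHS](big_setID C) /= (setIidPr CN).
rewrite [X in _ = _ + X]big1 ?addr0 // => s; rewrite inE => /andP [sC sN].
have [->|st] := eqVneq (A s t) 0; first by rewrite mulr0.
by rewrite (component_adj sN tC st) in sC.
Qed.

End NullVector.

End CartanComponents.

Section Faces.
Variables (R : realType) (S : finType) (n : nat).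

Lemma pairingD (a x y : 'rV[R]_n) :
  pairing a (x + y) = pairing a x + pairing a y.
Proof.
by rewrite /pairing -big_split; apply: eq_bigr => i _; rewrite mxE mulrDr.
Qed.

Lemma pairingZ (a x : 'rV[R]_n) (k : R) : pairing a (k *: x) = k * pairing a x.
Proof.
by rewrite /pairing mulr_sumr; apply: eq_bigr => i _; rewrite mxE mulrCA.
Qed.

Lemma pairing_sum (a : 'rV[R]_n) (I : Type) (r : seq I) (P : pred I)
    (F : I -> 'rV[R]_n) :
  pairing a (\sum_(i <- r | P i) F i) = \sum_(i <- r | P i) pairing a (F i).
Proof.
apply: (big_morph _ (pairingD a)).
by rewrite /pairing big1 // => i _; rewrite mxE mulr0.
Qed.

Lemma defines_face_setD (alpha : S -> 'rV[R]_n) (T N : {set S}) (z : 'rV[R]_n) :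
  defines_face alpha T -> N \subset T ->
  (forall s, s \in T :\: N -> pairing (alpha s) z = 0) ->
  (forall s, s \in N -> pairing (alpha s) z < 0) ->
  defines_face alpha (T :\: N).
Proof.
move=> [x x_face] NT z_eq0 z_lt0.
pose q s := pairing (alpha s) z / - pairing (alpha s) x.
pose K := 1 + \big[Num.max/0]_(s | s \notin T) q s.
exists (K *: x + z) => s; rewrite pairingD pairingZ.
have [x_eq0 x_lt0] := x_face s.
have [sT|sT] := boolP (s \in T).
  rewrite x_eq0 // mulr0 add0r !inE sT andbT.
  case: (boolP (s \in N)) => sN; split=> // _; first exact: z_lt0.
  by apply: z_eq0; rewrite !inE sN sT.
rewrite !inE (negbTE sT) andbF; split=> // _.
have ax := x_lt0 sT.
have qK : q s <= \big[Num.max/0]_(t | t \notin T) q t := le_bigmax_cond 0 q sT.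
have : q s < K by apply: le_lt_trans qK _; rewrite ltrDr ltr01.
rewrite ltr_pdivrMr ?oppr_gt0 // => zK; lra.
Qed.

Lemma defines_face_setD_nonzero_components (alpha v : S -> 'rV[R]_n)
    (T N : {set S}) :
  is_cartan (cartan_of alpha v) -> defines_face alpha T -> N \subset T ->
  (forall s t, s \in T :\: N -> t \in N -> cartan_of alpha v s t = 0) ->
  (forall s, s \in N -> ~ zero_type
     (subA (cartan_of alpha v) (component (cartan_of alpha v) N s))) ->
  defines_face alpha (T :\: N).
Proof.
move=> [A_diag [A_offdiag [A_zero_sym _]]] T_face NT N_orth N_nonzero.
have [[c c_lt0]|[y [y_ge0 [i0 y_gt0] y_null]]] :=
  gordan (fun i : 'I_#|N| => cartan_of alpha v (enum_val i)) (enum_uniq N).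
  apply: (defines_face_setD (z := \sum_(t in N) c t *: v t) T_face NT) => s sN.
    rewrite pairing_sum big1 // => t tN.
    by rewrite pairingZ [pairing _ _](N_orth s t sN tN) mulr0.
  rewrite pairing_sum; under eq_bigr do rewrite pairingZ mulrC.
  by have := c_lt0 (enum_rank_in sN s); rewrite enum_rankK_in // big_enum.
have s0N := enum_valP i0; set s0 := enum_val i0 in s0N.
pose w s := if s \in N then y (enum_rank_in s0N s) else 0.
case: (N_nonzero s0 s0N).
apply: (zero_type_component_of_null_vector A_diag A_offdiag A_zero_sym (y := w)).
- by move=> s sN; rewrite /w sN.
- move=> t tN; rewrite -[RHS](y_null t) ?mem_enum // big_enum_val.
  by apply: eq_bigr => i _; rewrite /w enum_valP enum_valK_in.
- exact: s0N.
- by rewrite /w s0N enum_valK_in.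
Qed.

Lemma defines_face_component_part (alpha v : S -> 'rV[R]_n) (T1 T2 : {set S})
    (P : pred {set S}) :
  is_cartan (cartan_of alpha v) -> [disjoint T1 & T2] ->
  defines_face alpha (T1 :|: T2) -> T1 \subset perp (cartan_of alpha v) T2 ->
  (forall C, ~~ P C -> ~ zero_type (subA (cartan_of alpha v) C)) ->
  defines_face alpha
    (T1 :|: [set s in T2 | P (component (cartan_of alpha v) T2 s)]).
Proof.
move=> A_cartan T12 T_face T1_perp P_nonzero.
have [_ [_ [A_zero_sym _]]] := A_cartan.
set A := cartan_of alpha v in A_cartan A_zero_sym T1_perp P_nonzero *.
set N := [set s in T2 | ~~ P (component A T2 s)].
have N_closed : closed (cartan_rel A T2) N.
  move=> s t st; rewrite !inE (component_eq A_zero_sym (connect1 st)).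
  by case/and3P: st => -> -> _.
have NT2 : N \subset T2 by apply/subsetP => s; rewrite inE => /andP [].
have -> : T1 :|: [set s in T2 | P (component A T2 s)] = (T1 :|: T2) :\: N.
  apply/setP => s; rewrite !inE; case: (boolP (s \in T1)) => [sT1|_].
    by rewrite (disjointFr T12 sT1).
  by case: (s \in T2); rewrite /= ?negbK ?andbT.
apply: (defines_face_setD_nonzero_components A_cartan) => //.
- by apply: subset_trans NT2 _; exact: subsetUr.
- move=> s t /setDP [sT sN] tN; have tT2 := subsetP NT2 t tN.
  case/setUP: sT => [sT1|sT2].
    move/subsetP: T1_perp => /(_ s sT1); rewrite inE.
    by move=> /forallP /(_ t) /implyP /(_ tT2) /eqP.
  apply/eqP; apply: contraNT sN => st.
  by rewrite (N_closed s t) // /cartan_rel sT2 tT2.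
- move=> s sN; rewrite (component_restrict NT2 N_closed sN).
  by apply: P_nonzero; move: sN; rewrite inE => /andP [].
Qed.

End Faces.

Unset Implicit Arguments.

Theorem lemma5p3 (R : realType) (n : nat) (S : finType)
    (alpha v : S -> 'rV[R]_n) (T1 T2 : {set S}) :
  is_coxeter_polytope alpha v ->
  [disjoint T1 & T2] ->
  defines_face alpha (T1 :|: T2) ->
  T1 \subset perp (cartan_of alpha v) T2 ->
  [/\ defines_face alpha (T1 :|: zero_part (cartan_of alpha v) T2),
      defines_face alpha
        (T1 :|: zero_part (cartan_of alpha v) T2 :|: pos_part (cartan_of alpha v) T2)
    & defines_face alpha
        (T1 :|: zero_part (cartan_of alpha v) T2 :|: neg_part (cartan_of alpha v) T2)].
Proof.
move=> [A_cartan _ _ _] T12 T_face T1_perp.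
set A := cartan_of alpha v in A_cartan T1_perp *.
have part_face (P : pred {set S}) :
    (forall C, ~~ P C -> ~ zero_type (subA A C)) ->
    defines_face alpha (T1 :|: [set s in T2 | P (component A T2 s)]).
  exact: defines_face_component_part.
have zero_or_face (Q : pred {set S}) : defines_face alpha
    (T1 :|: zero_part A T2 :|: [set s in T2 | Q (component A T2 s)]).
  rewrite -setUA (_ : zero_part A T2 :|: _ = [set s in T2 |
      `[< zero_type (subA A (component A T2 s)) >] || Q (component A T2 s)]).
    apply: (part_face (fun C => `[< zero_type (subA A C) >] || Q C)) => C.
    by rewrite negb_or => /andP [/asboolPn].
  by apply/setP => s; rewrite !inE; case: (s \in T2).
split.
- by apply: (part_face (fun C => `[< zero_type (subA A C) >])) => C /asboolPn.
- exact: zero_or_face (fun C => `[< positive_type (subA A C) >]).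
- exact: zero_or_face (fun C => `[< negative_type (subA A C) >]).
Qed.
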